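(* For all integers $n\ge 1$ and $\ell\ge 2$, \[\binom{n}{2}-(n-1)\le \max(n,\ell)\le \binom{n}{2}-\left\lfloor\frac{n}{2}\right\rfloor.\]
   Context: All graphs are finite and simple. Vertex labels lie in $\mathbb{Z}_\ell$. In the neighborhood Lights Out game on a graph $G$, one starts with a labeling $V(G)\to\mathbb{Z}_\ell$; toggling a vertex $v$ adds $1$ (mod $\ell$) to the label of every vertex in the closed neighborhood $N[v]$; the game is won when every label is $0$. $G$ is $N$-AW (always winnable) if the game can be won from every initial labeling. $\max(n,\ell)$ is the maximum number of edges of an $N$-AW graph on $n$ vertices. *)

From mathcomp Require Import all_boot all_algebra.
Set Implicit Arguments. Unset Strict Implicit.
 Unset Printing Implicit Defensive.
Import GRing.Theory.
Local Open Scope ring_scope.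

Definition graph (n : nat) := {ffun 'I_n * 'I_n -> bool}.

Definition adj n (G : graph n) (u v : 'I_n) : bool := G (u, v).

Definition simpleb n (G : graph n) : bool :=
  [forall u, ~~ adj G u u] && [forall u, forall v, adj G u v == adj G v u].

Definition in_cnbhd n (G : graph n) (v u : 'I_n) : bool := (u == v) || adj G v u.

Definition nedges n (G : graph n) : nat :=
  #|[set p : 'I_n * 'I_n | adj G p.1 p.2 && (p.1 < p.2)%N]|.

(* A strategy is recorded by the number
   t u (mod ell) of times each vertex u is toggled (order is irrelevant);
   toggling u adds 1 to every label in N[u]. *)
Definition N_winnable n (ell : nat) (G : graph n) (f : {ffun 'I_n -> 'Z_ell}) : bool :=
  [exists t : {ffun 'I_n -> 'Z_ell},
     [forall v, f v + \sum_(u | in_cnbhd G u v) t u == 0]].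

Definition N_AW n (ell : nat) (G : graph n) : bool :=
  [forall f : {ffun 'I_n -> 'Z_ell}, @N_winnable n ell G f].

Arguments N_winnable : clear implicits.
Arguments N_AW : clear implicits.
Definition maxAW (n ell : nat) : nat :=
  \max_(G : graph n | simpleb G && @N_AW n ell G) nedges G.

From mathcomp Require Import all_boot all_algebra zify.
Set Implicit Arguments. Unset Strict Implicit. Unset Printing Implicit Defensive.
Import GRing.Theory.

(* Upper bound: if two vertices u, w of an N-AW graph were adjacent to all
   others, every toggle would change the labels of u and w alike, so the
   labeling with 1 at u and 0 elsewhere could not be won.  Hence at most one
   vertex is universal, every other vertex lies on a non-edge, and there are at
   least ceil((n-1)/2) = floor(n/2) non-edges.
   Lower bound: let H be the matching {1,2}, {3,4}, ... together with, when n
   is even, the edges from 0 to every odd vertex.  Every vertex has at most one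
   smaller H-neighbour, so H has at most n - 1 edges.  In the complement of H
   the closed neighbourhood of v is the complement of N_H(v), so a toggle
   vector t with no effect satisfies sum_{u in N_H(v)} t u = sum_u t u for
   every v; reading these equations along H forces t = 0 over every Z_ell,
   so the toggle map is invertible. *)

Lemma card_ltn_pairs n : #|[set p : 'I_n * 'I_n | p.1 < p.2]| = 'C(n, 2).
Proof.
rewrite -sum1dep_card.
rewrite (reindex (fun p : 'I_n * 'I_n => (p.2, p.1))) /=; last first.
  by exists (fun p : 'I_n * 'I_n => (p.2, p.1)) => -[].
rewrite -(pair_big_dep xpredT (fun j i : 'I_n => i < j) (fun _ _ => 1)) /=.
rewrite -bin2_sum big_mkord; apply: eq_bigr => j _.
by rewrite (big_ord_narrow (ltnW (ltn_ord j))) sum1_card card_ord.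
Qed.

Section Graph.
Variables (n : nat) (G : graph n).

Definition nonedges := [set p : 'I_n * 'I_n | ~~ adj G p.1 p.2 && (p.1 < p.2)].

Lemma nedges_add_nonedges : nedges G + #|nonedges| = 'C(n, 2).
Proof.
rewrite /nedges -card_ltn_pairs.
rewrite -(cardsID [set p | adj G p.1 p.2] [set p : 'I_n * 'I_n | p.1 < p.2]).
by congr (_ + _); apply: eq_card => p; rewrite !inE // andbC.
Qed.

Definition universal (u : 'I_n) := [forall v, (v != u) ==> adj G u v].

Hypothesis G_simple : simpleb G.

Lemma adj_sym u v : adj G u v = adj G v u.
Proof. by case/andP: G_simple => _ /forallP/(_ u)/forallP/(_ v)/eqP. Qed.

Lemma in_cnbhd_universal u w : universal u -> in_cnbhd G w u.
Proof.
move=> /forallP/(_ w); rewrite /in_cnbhd adj_sym eq_sym.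
by case: eqP => //= _ /implyP; apply.
Qed.

Lemma N_AW_universal_eq ell u1 u2 :
  N_AW n ell G -> universal u1 -> universal u2 -> u1 = u2.
Proof.
move=> /forallP G_AW u1_univ u2_univ; apply/eqP/negP => /negP u12.
pose f : {ffun 'I_n -> 'Z_ell} := [ffun v => (v == u1)%:R]%R.
have /existsP[t /forallP win] := G_AW f.
have total_effect u : universal u -> (\sum_(w | in_cnbhd G w u) t w = \sum_w t w)%R.
  by move=> u_univ; apply: eq_bigl => w; rewrite in_cnbhd_universal.
move: (win u1) (win u2); rewrite !total_effect // !ffunE eqxx [u2 == u1]eq_sym (negbTE u12).
rewrite mulr1n mulr0n add0r => /eqP one_add_sum /eqP sum0.
by move: one_add_sum; rewrite sum0 addr0 => /eqP; rewrite oner_eq0.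
Qed.

Lemma nonuniversal_in_nonedge u : ~~ universal u ->
  u \in [set p.1 | p in nonedges] :|: [set p.2 | p in nonedges].
Proof.
rewrite negb_forall => /existsP[v]; rewrite negb_imply => /andP[vu not_uv].
rewrite inE; case: (ltngtP u v) => [uv|vu'|/val_inj uv].
- by apply/orP; left; apply/imsetP; exists (u, v); rewrite // inE /= not_uv uv.
- by apply/orP; right; apply/imsetP; exists (v, u); rewrite // inE /= -adj_sym not_uv vu'.
- by rewrite uv eqxx in vu.
Qed.

Lemma card_nonedges_N_AW ell : N_AW n ell G -> n./2 <= #|nonedges|.
Proof.
move=> G_AW; pose U := [set u | universal u].
have card_U : #|U| <= 1.
  apply/card_le1_eqP => u1 u2; rewrite !inE => u1_univ u2_univ.
  exact: N_AW_universal_eq G_AW u2_univ u1_univ.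
have cover : #|~: U| <= #|nonedges| + #|nonedges|.
  have : ~: U \subset [set p.1 | p in nonedges] :|: [set p.2 | p in nonedges].
    by apply/subsetP => u; rewrite !inE => /nonuniversal_in_nonedge; rewrite inE.
  move=> /subset_leq_card /leq_trans; apply; apply: leq_trans (leq_card_setU _ _) _.
  exact: leq_add (leq_imset_card _ _) (leq_imset_card _ _).
have := cardsC U; rewrite card_ord leq_half_double -mul2n; lia.
Qed.

End Graph.

Section Toggles.
Local Open Scope ring_scope.
Variables (n ell : nat) (G : graph n).

Definition toggles (t : {ffun 'I_n -> 'Z_ell}) : {ffun 'I_n -> 'Z_ell} :=
  [ffun v => \sum_(u | in_cnbhd G u v) t u].

Lemma togglesB t1 t2 : toggles (t1 - t2) = toggles t1 - toggles t2.
Proof.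
by apply/ffunP => v; rewrite !ffunE -sumrB; apply: eq_bigr => u _; rewrite !ffunE.
Qed.

Lemma N_AW_of_toggles_ker : (forall t, toggles t = 0 -> t = 0) -> N_AW n ell G.
Proof.
move=> ker; have toggles_inj : injective toggles.
  move=> t1 t2 eq_t; apply/eqP; rewrite -subr_eq0; apply/eqP/ker.
  by rewrite togglesB eq_t subrr.
have [untoggle _ toggles_untoggle] := injF_bij toggles_inj.
apply/forallP => f; apply/existsP; exists (untoggle (- f)); apply/forallP => v.
by have /ffunP/(_ v) := toggles_untoggle (- f); rewrite !ffunE => ->; rewrite subrr.
Qed.

End Toggles.

Section Complement.
Variables (n : nat) (h : rel 'I_n).

Definition cograph : graph n := [ffun p => (p.1 != p.2) && ~~ h p.1 p.2].

Lemma cograph_simple : symmetric h -> simpleb cograph.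
Proof.
move=> h_sym; rewrite /simpleb /adj /cograph.
apply/andP; split; apply/forallP => u; rewrite ?ffunE /= ?eqxx //.
by apply/forallP => v; rewrite !ffunE /= (eq_sym v) (h_sym v).
Qed.

Lemma in_cnbhd_cograph u v : irreflexive h -> in_cnbhd cograph u v = ~~ h u v.
Proof.
move=> h_irr; rewrite /in_cnbhd /adj /cograph ffunE /=.
by case: eqP => [->|/eqP vu]; rewrite ?h_irr // eq_sym vu.
Qed.

Lemma nonedges_cograph : nonedges cograph = [set p | h p.1 p.2 && (p.1 < p.2)].
Proof.
apply/setP => -[u v]; rewrite !inE /adj /cograph ffunE /= negb_and !negbK -val_eqE.
by case: ltngtP; rewrite /= ?andbT ?andbF.
Qed.

Lemma card_edges_unique_lower_nbr :
  (forall u1 u2 v : 'I_n, u1 < v -> u2 < v -> h u1 v -> h u2 v -> u1 = u2) ->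
  #|[set p | h p.1 p.2 && (p.1 < p.2)]| <= n.-1.
Proof.
move=> lower_uniq; rewrite -(@card_in_imset _ _ snd); last first.
  move=> [u1 v] [u2 w]; rewrite !inE /= => /andP[h1 lt1] /andP[h2 lt2] vw.
  by subst w; rewrite (lower_uniq u1 u2 v).
case: n h lower_uniq => [|m] h' _ /=; first by rewrite (leq_trans (max_card _)) ?card_ord.
set lower_edges := [set p | _].
have /proper_card : [set p.2 | p in lower_edges] \proper [set: 'I_m.+1].
  rewrite properT; apply/negP => /eqP full.
  have /imsetP[[u v] /[!inE] /andP[_ /=] + v0] : ord0 \in [set p.2 | p in lower_edges].
    by rewrite full inE.
  by rewrite -v0.
by rewrite cardsT card_ord.
Qed.

End Complement.

(* [hub n] is the graph H of the lower bound. *)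
Definition hub_matching n (u v : nat) : bool :=
  (odd u && (v == u.+1)) || (~~ odd n && (u == 0) && odd v).

Definition hub n : rel 'I_n := fun u v => hub_matching n u v || hub_matching n v u.
Arguments hub : clear implicits.

Lemma hub_sym n : symmetric (hub n).
Proof. by move=> u v; rewrite /hub orbC. Qed.

Lemma hub_irrefl n : irreflexive (hub n).
Proof. by move=> u; rewrite /hub /hub_matching; lia. Qed.

Lemma hub_unique_lower_nbr n (u1 u2 v : 'I_n) :
  u1 < v -> u2 < v -> hub n u1 v -> hub n u2 v -> u1 = u2.
Proof. by rewrite /hub /hub_matching => *; apply: val_inj => /=; lia. Qed.

Ltac hub_nbrs :=
  let u := fresh "u" in
  move=> u; have := ltn_ord u; rewrite -?val_eqE /hub /hub_matching /=; lia.

Section HubKernel.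
Local Open Scope ring_scope.
Variables (n ell : nat) (t : {ffun 'I_n -> 'Z_ell}).
Hypothesis t_ker : toggles (cograph (hub n)) t = 0.

Let S := \sum_u t u.

Lemma sum_hub_nonnbrs v : \sum_(u | ~~ hub n u v) t u = 0.
Proof.
have /ffunP/(_ v) := t_ker; rewrite !ffunE => {2}<-.
by apply: eq_bigl => u; rewrite in_cnbhd_cograph //; apply: hub_irrefl.
Qed.

Lemma sum_hub_nbrs v : \sum_(u | hub n u v) t u = S.
Proof. by rewrite /S [RHS](bigID (hub n ^~ v)) /= sum_hub_nonnbrs addr0. Qed.

Lemma hub_isolated v : (forall u, hub n u v = false) -> S = 0.
Proof. by move=> no_nbr; rewrite -(sum_hub_nbrs v) big_pred0. Qed.

Lemma hub_nbr1 v x : (forall u, hub n u v = (u == x)) -> t x = S.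
Proof. by move=> nbrs; rewrite -(sum_hub_nbrs v) (big_pred1 x). Qed.

Lemma hub_nbr2 v x y : x != y -> (forall u, hub n u v = (u == x) || (u == y)) ->
  t x + t y = S.
Proof.
move=> xy nbrs; rewrite -(sum_hub_nbrs v) (bigD1 x) ?nbrs ?eqxx //= (big_pred1 y) //.
move=> u; rewrite nbrs; case: (eqVneq u x) => [->|_] /=; first by rewrite (negbTE xy).
by rewrite andbT.
Qed.

Lemma sum_eq_single x : (forall u, u != x -> t u = 0) -> S = t x.
Proof. by move=> t_supp; rewrite /S (bigD1 x) //= big1 ?addr0. Qed.

Lemma hub_ker_odd : odd n -> t = 0.
Proof.
move=> n_odd; have n_pos : (0 < n)%N by lia.
pose o := Ordinal n_pos.
have S0 : S = 0 by apply: (hub_isolated (v := o)); hub_nbrs.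
have t_off0 u : u != o -> t u = 0.
  rewrite -val_eqE /= -S0 => u0; have := ltn_ord u; case: (boolP (odd u)) => u_odd u_lt.
  - have succ_lt : (u.+1 < n)%N by lia.
    by apply: (hub_nbr1 (v := Ordinal succ_lt)); hub_nbrs.
  - have pred_lt : (u.-1 < n)%N by lia.
    by apply: (hub_nbr1 (v := Ordinal pred_lt)); hub_nbrs.
apply/ffunP => u; rewrite ffunE; case: (eqVneq u o) => [->|]; last exact: t_off0.
by rewrite -S0 (sum_eq_single t_off0).
Qed.

Lemma hub_ker_even : ~~ odd n -> (0 < n)%N -> t = 0.
Proof.
move=> n_even n_pos; have last_lt : (n.-1 < n)%N by lia.
pose o := Ordinal n_pos; pose l := Ordinal last_lt.
have t0 : t o = S by apply: (hub_nbr1 (v := l)); hub_nbrs.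
have t_even (u : 'I_n) : ~~ odd u -> u != o -> t u = 0.
  rewrite -val_eqE /= => u_even u0; have pred_lt : (u.-1 < n)%N by have := ltn_ord u; lia.
  have := hub_nbr2 (v := Ordinal pred_lt) (x := o) (y := u).
  rewrite t0 -[X in _ = X]addr0 => /(_ _ _)/addrI; apply; first by rewrite -val_eqE /=; lia.
  hub_nbrs.
have t0_eq0 : t o = 0.
  rewrite -(sum_hub_nonnbrs o) (bigD1 o) ?hub_irrefl //= big1 ?addr0 // => u /andP[].
  by rewrite /hub /hub_matching /= => not_nbr /t_even; apply; lia.
have S0 : S = 0 by rewrite -t0.
have t_odd (u : 'I_n) : odd u -> u != l -> t u = 0.
  rewrite -val_eqE /= => u_odd ul; have succ_lt : (u.+1 < n)%N by have := ltn_ord u; lia.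
  by rewrite -S0; apply: (hub_nbr1 (v := Ordinal succ_lt)); hub_nbrs.
have t_offl (u : 'I_n) : u != l -> t u = 0.
  move=> ul; case: (eqVneq u o) => [-> //|u0].
  by case: (boolP (odd u)) => [/t_odd|/t_even]; apply.
apply/ffunP => u; rewrite ffunE; case: (eqVneq u l) => [->|]; last exact: t_offl.
by rewrite -S0 (sum_eq_single t_offl).
Qed.

Lemma hub_ker : t = 0.
Proof.
case: (posnP n) => [n0|n_pos]; first by apply/ffunP => u; have := ltn_ord u; lia.
by case: (boolP (odd n)) => [/hub_ker_odd | /hub_ker_even]; apply.
Qed.

End HubKernel.

Lemma cograph_hub_N_AW n ell : N_AW n ell (cograph (hub n)).
Proof. by apply: N_AW_of_toggles_ker => t; apply: hub_ker. Qed.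

Lemma card_nonedges_cograph_hub n : #|nonedges (cograph (hub n))| <= n.-1.
Proof.
rewrite nonedges_cograph; apply: card_edges_unique_lower_nbr.
exact: hub_unique_lower_nbr.
Qed.

Theorem proposition4p1 (n ell : nat) (hn : (1 <= n)%N) (hl : (2 <= ell)%N) :
  ('C(n, 2) - (n - 1) <= maxAW n ell <= 'C(n, 2) - n./2)%N.
Proof.
apply/andP; split.
- have : nedges (cograph (hub n)) <= maxAW n ell.
    by apply: leq_bigmax_cond; rewrite cograph_simple ?cograph_hub_N_AW //; apply: hub_sym.
  have := nedges_add_nonedges (cograph (hub n)).
  have := card_nonedges_cograph_hub n.
  lia.
- apply/bigmax_leqP => G /andP[G_simple G_AW].
  have := card_nonedges_N_AW G_simple G_AW; have := nedges_add_nonedges G.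
  lia.
Qed.
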